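(* There exist constants $c,C>0$, infinitely many $n$, and for each such $n$ a partial Boolean function $f_n:X_n\rightarrow\{0,1\}$ with $X_n\subseteq\{0,1\}^n$, such that $WUQ(f_n)\le C$ and $WUC(f_n)\ge c\log n$.
   Context: Query model: a classical randomized query algorithm adaptively queries input bits $x_i$ (each query costs one) and outputs a bit; a quantum query algorithm alternates input-independent unitaries with the oracle $O_x:|i,b,z\rangle\mapsto|i,b\oplus x_i,z\rangle$ and measures an output bit. For an algorithm whose minimum over $x\in X$ of the probability of outputting $f(x)$ is $p>1/2$, its bias is $\beta=p-1/2$ and its weakly unbounded cost is (number of queries) $+\log(1/(2\beta))$. $WUQ(f)$ (resp. $WUC(f)$) is the minimum weakly unbounded cost over quantum (resp. classical randomized) algorithms. $\log$ is base 2. *)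

From Stdlib Require List.
From HB Require Import structures.
From mathcomp Require Import all_boot all_order all_algebra.
From mathcomp Require Import all_classical all_reals all_analysis.
From mathcomp Require Import complex.
Set Implicit Arguments. Unset Strict Implicit. Unset Printing Implicit Defensive.
Import Order.TTheory GRing.Theory Num.Theory.
Local Open Scope ring_scope.

(* Inputs x in {0,1}^n ; a partial Boolean function is a domain
   X : {set input n} together with f : input n -> bool (only its values on X matter). *)
Definition input (n : nat) := {ffun 'I_n -> bool}.

Definition log2 {R : realType} (y : R) : R := ln y / ln 2.

(* minimum over x in X of the success probability (1 is the neutral element;
   success probabilities are <= 1) *)
Definition minsucc {R : realType} n (X : {set input n}) (p : input n -> R) : R :=
  \big[Num.min/1]_(x in X) p x.

Definition wu_cost {R : realType} (T : nat) (p : R) : R :=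
  T%:R + log2 (1 / (2 * (p - 1/2))).

Inductive dtree (n : nat) : Type :=
| Leaf of bool
| Node of 'I_n & dtree n & dtree n.

Fixpoint dt_eval n (t : dtree n) (x : input n) : bool :=
  match t with
  | Leaf b => b
  | Node i t0 t1 => if x i then dt_eval t1 x else dt_eval t0 x
  end.

Fixpoint dt_depth n (t : dtree n) : nat :=
  match t with
  | Leaf _ => 0
  | Node _ t0 t1 => (maxn (dt_depth t0) (dt_depth t1)).+1
  end.

Record ralg (R : realType) (n : nat) := RAlg {
  ra_dist : seq (R * dtree n);
  ra_ge0 : forall p, Stdlib.Lists.List.In p ra_dist -> 0 <= p.1;
  ra_sum1 : \sum_(p <- ra_dist) p.1 = 1 }.

Arguments ra_dist {R n} r.

Definition ra_queries R n (A : ralg R n) : nat := \max_(p <- ra_dist A) dt_depth p.2.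

Definition ra_succ R n (A : ralg R n) (f : input n -> bool) (x : input n) : R :=
  \sum_(p <- ra_dist A) p.1 * (dt_eval p.2 x == f x)%:R.

Definition WUC (R : realType) n (f : input n -> bool) (X : {set input n}) : R :=
  inf [set c : R | exists A : ralg R n,
        1/2 < minsucc X (ra_succ A f) /\ c = wu_cost (ra_queries A) (minsucc X (ra_succ A f))].

(* basis states |i, b, z> with workspace z in 'I_m *)
Definition qbasis (n m : nat) := ('I_n * bool * 'I_m)%type.

Definition qvec (R : realType) (T : finType) := T -> R[i].
Definition qop (R : realType) (T : finType) := T -> T -> R[i].

Definition qapply R (T : finType) (U : qop R T) (v : qvec R T) : qvec R T :=
  fun k => \sum_j U k j * v j.

Definition unitary R (T : finType) (U : qop R T) : Prop :=
  forall i j : T, \sum_k (U k i)^* * U k j = (i == j)%:R.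

Definition normsq (R : realType) (z : R[i]) : R := (complex.Re z) ^+ 2 + (complex.Im z) ^+ 2.

Definition unit_vec R (T : finType) (v : qvec R T) : Prop := \sum_k normsq (v k) = 1.

Definition oracle R n m (x : input n) (v : qvec R (qbasis n m)) : qvec R (qbasis n m) :=
  fun k => v (k.1.1, k.1.2 (+) x k.1.1, k.2).

(* A quantum algorithm with T = size qa_Us queries computes
   U_T O_x ... U_1 O_x U_0 |psi0> and measures the bit register b.
   The input-independent initial state psi0 is an arbitrary unit vector
   (equivalent to starting in a fixed basis state, since U_0 is arbitrary). *)
Record qalg (R : realType) (n : nat) := QAlg {
  qa_m : nat;
  qa_psi0 : qvec R (qbasis n qa_m);
  qa_U0 : qop R (qbasis n qa_m);
  qa_Us : seq (qop R (qbasis n qa_m));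
  qa_psi0_unit : unit_vec qa_psi0;
  qa_U0_unitary : unitary qa_U0;
  qa_Us_unitary : forall U, Stdlib.Lists.List.In U qa_Us -> unitary U }.

Arguments qa_m {R n} q.
Arguments qa_psi0 {R n} q.
Arguments qa_U0 {R n} q.
Arguments qa_Us {R n} q.

Definition qa_final R n (A : qalg R n) (x : input n) : qvec R (qbasis n (qa_m A)) :=
  foldl (fun v U => qapply U (oracle x v)) (qapply (qa_U0 A) (qa_psi0 A)) (qa_Us A).

Arguments qa_final {R n} A x _.

Definition qa_queries R n (A : qalg R n) : nat := size (qa_Us A).

Definition qa_succ R n (A : qalg R n) (f : input n -> bool) (x : input n) : R :=
  \sum_(k : qbasis n (qa_m A) | k.1.2 == f x) normsq (qa_final A x k).

Definition WUQ (R : realType) n (f : input n -> bool) (X : {set input n}) : R :=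
  inf [set c : R | exists A : qalg R n,
        1/2 < minsucc X (qa_succ A f) /\ c = wu_cost (qa_queries A) (minsucc X (qa_succ A f))].

Arguments WUC {R n} f X.
Arguments WUQ {R n} f X.

From HB Require Import structures.
From mathcomp Require Import all_boot all_order all_algebra.
From mathcomp Require Import all_classical all_reals all_analysis.
From mathcomp Require Import complex.
From mathcomp Require Import lra ring.
Import Order.TTheory GRing.Theory Num.Theory.
Set Implicit Arguments. Unset Strict Implicit. Unset Printing Implicit Defensive.
Local Open Scope ring_scope.

(* The hard function is the inner product ip(s) = <s1, s2> of s = (s1, s2) in
   F_2^m x F_2^m, given through the Hadamard code x_s = (<v, s>)_v of length
   n = 4^m.  Quantumly one query suffices: with the target qubit in |->, the
   oracle writes the phases (-1)^<v, s>, a Hadamard transform on the index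
   register recovers s exactly, and ip(s) is then written into the target, so
   WUQ <= 1.  Classically, s |-> (-1)^(t(x_s)) for a depth-d decision tree t
   has Fourier l1-norm at most 2^d, since each query multiplies by
   (1 +- chi_v)/2; as ip is bent, every character has correlation 2^m with
   (-1)^ip over the 4^m points, so the bias is at most 2^d / 2^(m+1) and the
   weakly unbounded cost is at least m = (log n)/2. *)

Lemma addr_eq0_char2 (G : zmodType) (u v : G) : v + v = 0 -> (u + v == 0) = (u == v).
Proof.
move=> vv; have oppv : - v = v by apply/esym/eqP; rewrite -addr_eq0 vv.
by rewrite addr_eq0 oppv.
Qed.

Section BooleanCube.
Variable I : finType.
Local Notation V := {ffun I -> bool}.

Definition dot (u v : V) : bool := \big[addb/false]_i (u i && v i).

Lemma addbfE (u v : V) i : (u + v) i = u i (+) v i.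
Proof. by rewrite ffunE. Qed.

Lemma addrr_bool_ffun (u : V) : u + u = 0.
Proof. by apply/ffunP => i; rewrite addbfE addbb ffunE. Qed.

Lemma dotC u v : dot u v = dot v u.
Proof. by apply: eq_bigr => i _; rewrite andbC. Qed.

Lemma dotDl u w v : dot (u + w) v = dot u v (+) dot w v.
Proof. by rewrite /dot -big_split; apply: eq_bigr => i _; rewrite addbfE andb_addl. Qed.

Lemma dot0l v : dot 0 v = false.
Proof. by rewrite /dot big1 // => i _; rewrite ffunE. Qed.

Lemma dot_delta j u : dot [ffun i => i == j] u = u j.
Proof.
rewrite /dot (bigD1 j) //= big1 ?addbF; first by rewrite ffunE eqxx.
by move=> i /negbTE ij; rewrite ffunE ij.
Qed.

Lemma sum_sign_dot (R : numFieldType) (w : V) :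
  \sum_v (-1) ^+ dot w v = if w == 0 then #|{: V}|%:R else 0 :> R.
Proof.
case: eqP => [->|/eqP w0].
  by under eq_bigr do rewrite dot0l expr0; rewrite sumr_const.
have [j wj] : exists j, w j.
  apply/existsP; apply: contraR w0 => /existsPn wF.
  by apply/eqP/ffunP => j; rewrite ffunE; apply/negbTE/wF.
set S := \sum_v _.
have SN : S = - S.
  rewrite {1}/S (reindex_inj (addIr [ffun i => i == j])) /= -sumrN.
  by apply: eq_bigr => v _; rewrite dotC dotDl dot_delta [dot v w]dotC wj signr_addb mulrN1.
have /eqP : S *+ 2 = 0 by rewrite mulr2n {1}SN addNr.
by rewrite mulrn_eq0 => /eqP.
Qed.
End BooleanCube.

Section InnerProduct.
Variable I : finType.
Local Notation V := {ffun I -> bool}.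
Local Notation W := (V * V)%type.

Definition dotp (u v : W) : bool := dot u.1 v.1 (+) dot u.2 v.2.

Definition ip (s : W) : bool := dot s.1 s.2.

Definition chi (R : pzRingType) (u v : W) : R := (-1) ^+ dotp u v.

Lemma addrr_bool_pair (u : W) : u + u = 0.
Proof. by case: u => a b; rewrite -[_ + _]/(a + a, b + b) !addrr_bool_ffun. Qed.

Lemma addIr_pair (w : W) : injective (fun u : W => u + w).
Proof. exact: addIr. Qed.

Lemma dotpC u v : dotp u v = dotp v u.
Proof. by rewrite /dotp dotC [dot u.2 _]dotC. Qed.

Lemma dotpDl u w v : dotp (u + w) v = dotp u v (+) dotp w v.
Proof.
rewrite /dotp !dotDl.
by case: (dot u.1 v.1); case: (dot u.2 v.2); case: (dot w.1 v.1); case: (dot w.2 v.2).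
Qed.

Variable R : numFieldType.

Lemma chiC u v : chi R u v = chi R v u.
Proof. by rewrite /chi dotpC. Qed.

Lemma chiDl u w v : chi R (u + w) v = chi R u v * chi R w v.
Proof. by rewrite /chi dotpDl signr_addb. Qed.

Lemma chi0l v : chi R 0 v = 1.
Proof. by rewrite /chi /dotp !dot0l. Qed.

Lemma sum_chi (w : W) : \sum_v chi R w v = if w == 0 then #|{: W}|%:R else 0.
Proof.
rewrite -(pair_bigA _ (fun a b => chi R w (a, b))) /=.
under eq_bigr do under eq_bigr do rewrite /chi /dotp /= signr_addb.
rewrite -big_distrlr /= !sum_sign_dot card_prod natrM.
by case: w => a b; rewrite xpair_eqE; case: (a == 0); case: (b == 0); rewrite ?mulr0 ?mul0r.
Qed.

Lemma walsh_ip (u : W) :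
  \sum_s chi R u s * (-1) ^+ ip s = (-1) ^+ ip u * #|{: V}|%:R.
Proof.
rewrite -(pair_bigA _ (fun a b => chi R u (a, b) * (-1) ^+ ip (a, b))) /=.
have inner a : \sum_(b : V) chi R u (a, b) * (-1) ^+ ip (a, b)
    = (-1) ^+ dot u.1 a * (if a == u.2 then #|{: V}|%:R else 0).
  under eq_bigr do rewrite /chi /dotp /ip /= signr_addb -mulrA -signr_addb -dotDl.
  by rewrite -big_distrr /= sum_sign_dot addr_eq0_char2 ?addrr_bool_ffun // eq_sym.
under eq_bigr do rewrite inner.
rewrite (bigD1 u.2) //= eqxx big1 ?addr0 // => a /negbTE ->.
by rewrite mulr0.
Qed.

Lemma norm_walsh_ip (u : W) :
  `|\sum_s chi R u s * (-1) ^+ ip s| = #|{: V}|%:R.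
Proof. by rewrite walsh_ip normrM normr_sign normr_nat mul1r. Qed.
End InnerProduct.

Arguments chi {I R}.

Section HadamardCode.
Variable I : finType.
Local Notation V := {ffun I -> bool}.
Local Notation W := (V * V)%type.

Definition hlen := #|{: W}|.
Definition hidx (i : 'I_hlen) : W := enum_val i.
Definition hcode (s : W) : input hlen := [ffun i => dotp (hidx i) s].
Definition hdom : {set input hlen} := [set hcode s | s : W].
Definition hip (x : input hlen) : bool := [exists s, (x == hcode s) && ip s].

Lemma hlenE : hlen = (#|{: V}| * #|{: V}|)%N.
Proof. exact: card_prod. Qed.

Lemma natr_hlen (R : pzSemiRingType) : hlen%:R = #|{: V}|%:R * #|{: V}|%:R :> R.
Proof. by rewrite hlenE natrM. Qed.

Lemma sum_hidx (R : nmodType) (F : W -> R) : \sum_(i < hlen) F (hidx i) = \sum_v F v.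
Proof. by rewrite /hidx -big_enum_val; apply: eq_bigl. Qed.

Lemma hcode_inj : injective hcode.
Proof.
move=> s s' eq_code.
have eq_dotp v : dotp s v = dotp s' v.
  have := congr1 (fun x : input hlen => x (enum_rank v)) eq_code.
  by rewrite !ffunE /hidx enum_rankK dotpC [dotp s' _]dotpC.
have := sum_chi rat (s + s').
under eq_bigr do rewrite /chi dotpDl eq_dotp addbb expr0.
rewrite sumr_const addr_eq0_char2 ?addrr_bool_pair //; case: eqP => // _ /eqP.
by rewrite pnatr_eq0 eqn0Ngt => /negP[]; apply/card_gt0P; exists s.
Qed.

Lemma hip_hcode s : hip (hcode s) = ip s.
Proof.
apply/existsP/idP => [[s' /andP[/eqP/hcode_inj-> //]]|ip_s].
by exists s; rewrite eqxx.
Qed.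
End HadamardCode.

Section FourierBound.
Variables (I : finType) (R : realFieldType).
Local Notation V := {ffun I -> bool}.
Local Notation W := (V * V)%type.
Local Notation M := (#|{: V}|%:R : R).

Definition fourier (c : W -> R) (s : W) : R := \sum_u c u * chi u s.

Definition l1norm (c : W -> R) : R := \sum_u `|c u|.

(* For |e| = 1, the coefficients of s |-> fourier c s * [chi w s = e]. *)
Definition restrict_half (e : R) (w : W) (c : W -> R) (u : W) : R :=
  (c u + e * c (u + w)) / 2.

Lemma l1norm_ge0 c : 0 <= l1norm c.
Proof. by apply: sumr_ge0 => u _; apply: normr_ge0. Qed.

Lemma fourier_restrict_half e w c s :
  fourier (restrict_half e w c) s = fourier c s * (1 + e * chi w s) / 2.
Proof.
have shift : \sum_(u : W) c (u + w) * chi u s = chi w s * fourier c s.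
  rewrite /fourier (reindex_inj (@addIr_pair _ w)) /= big_distrr /=; apply: eq_bigr => u _.
  by rewrite -addrA addrr_bool_pair addr0 chiDl; ring.
transitivity ((fourier c s + e * \sum_(u : W) c (u + w) * chi u s) / 2).
  rewrite /fourier big_distrr /= -big_split /= big_distrl /=.
  by apply: eq_bigr => u _; rewrite /restrict_half; ring.
by rewrite shift; ring.
Qed.

Lemma l1norm_restrict_half e w c : `|e| <= 1 -> l1norm (restrict_half e w c) <= l1norm c.
Proof.
move=> e_le1.
have shift : l1norm c = \sum_(u : W) `|c (u + w)| by exact: reindex_inj (@addIr_pair _ w).
have term u : `|restrict_half e w c u| <= (`|c u| + `|c (u + w)|) / 2.
  rewrite /restrict_half normrM normfV normr_nat ler_pM2r ?invr_gt0 ?ltr0n //.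
  apply: le_trans (ler_normD _ _) _; rewrite lerD2l normrM.
  by rewrite -[leRHS]mul1r ler_wpM2r.
apply: le_trans (ler_sum _ (fun u _ => term u)) _.
by rewrite -big_distrl big_split /= -shift -/(l1norm c); lra.
Qed.

Lemma signr_if (x a b g : bool) :
  (-1) ^+ ((if x then b else a) (+) g)
  = (1 + (-1) ^+ x) / 2 * (-1) ^+ (a (+) g) + (1 - (-1) ^+ x) / 2 * (-1) ^+ (b (+) g) :> R.
Proof. by case: x; rewrite ?expr0 ?expr1; field. Qed.

(* Querying x_i = <hidx i, s> splits the sum along the two halves chi (hidx i) = +-1. *)
Lemma tree_fourier_bound (t : dtree (hlen I)) (c : W -> R) :
  `|\sum_s fourier c s * (-1) ^+ (dt_eval t (hcode s) (+) ip s)|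
    <= 2 ^+ dt_depth t * M * l1norm c.
Proof.
elim: t c => [b|i t0 IH0 t1 IH1] c /=.
  have -> : \sum_s fourier c s * (-1) ^+ (b (+) ip s)
      = (-1) ^+ b * \sum_u c u * \sum_s chi u s * (-1) ^+ ip s.
    rewrite /fourier; under eq_bigr do rewrite big_distrl /=.
    rewrite exchange_big big_distrr /=; apply: eq_bigr => u _.
    rewrite !big_distrr /=; apply: eq_bigr => s _; rewrite signr_addb; ring.
  rewrite normrM normr_sign expr0 !mul1r /l1norm big_distrr /=.
  apply: le_trans (ler_norm_sum _ _ _) _; apply: ler_sum => u _.
  by rewrite normrM norm_walsh_ip mulrC.
set d := maxn _ _.
have split s : fourier c s * (-1) ^+ ((if hcode s i then dt_eval t1 (hcode s)
                                        else dt_eval t0 (hcode s)) (+) ip s)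
   = fourier (restrict_half 1 (hidx i) c) s * (-1) ^+ (dt_eval t0 (hcode s) (+) ip s)
   + fourier (restrict_half (-1) (hidx i) c) s * (-1) ^+ (dt_eval t1 (hcode s) (+) ip s).
  rewrite !fourier_restrict_half ffunE mul1r mulN1r.
  by rewrite signr_if mulrDr !mulrA.
have branch (t' : dtree (hlen I)) e : `|e| <= 1 -> (dt_depth t' <= d)%N ->
    2 ^+ dt_depth t' * M * l1norm (restrict_half e (hidx i) c) <= 2 ^+ d * M * l1norm c.
  move=> e_le1 t'_le; apply: ler_pM.
  - by apply: mulr_ge0; [apply: exprn_ge0 | ]; rewrite ler0n.
  - exact: l1norm_ge0.
  - by rewrite ler_wpM2r ?ler0n // ler_weXn2l ?ler1n.
  - exact: l1norm_restrict_half.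
under eq_bigr do rewrite split.
rewrite big_split /=; apply: le_trans (ler_normD _ _) _.
apply: le_trans (lerD (IH0 _) (IH1 _)) _.
have := branch t0 1; have := branch t1 (-1).
rewrite normrN normr1 lexx leq_maxl leq_maxr => /(_ isT isT) b1 /(_ isT isT) b0.
rewrite -!mulrA in b0 b1; rewrite exprS -!mulrA (mulr_natl _ 2) mulr2n.
exact: lerD.
Qed.

Lemma tree_correlation_ip (t : dtree (hlen I)) :
  \sum_s (-1) ^+ (dt_eval t (hcode s) (+) ip s) <= 2 ^+ dt_depth t * M.
Proof.
pose c (u : W) : R := (u == 0)%:R.
have fourier_c s : fourier c s = 1.
  rewrite /fourier (bigD1 (0 : W)) //= big1 ?addr0; first by rewrite chi0l /c eqxx mul1r.
  by move=> u /negbTE u0; rewrite /c u0 mul0r.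
have l1norm_c : l1norm c = 1.
  rewrite /l1norm (bigD1 (0 : W)) //= big1 ?addr0 /c ?eqxx ?normr1 // => u /negbTE u0.
  by rewrite u0 normr0.
have := tree_fourier_bound t c.
under eq_bigr do rewrite fourier_c mul1r.
by rewrite l1norm_c mulr1; apply: le_trans; apply: ler_norm.
Qed.

Lemma tree_success_count (t : dtree (hlen I)) :
  \sum_(s : W) (dt_eval t (hcode s) == ip s)%:R
    <= ((hlen I)%:R + 2 ^+ dt_depth t * M) / 2.
Proof.
have indicator (b g : bool) : (b == g)%:R = (1 + (-1) ^+ (b (+) g)) / 2 :> R.
  by case: b; case: g; rewrite /= ?expr0 ?expr1; field.
under eq_bigr do rewrite indicator.
rewrite -big_distrl big_split /= sumr_const ler_pM2r ?invr_gt0 ?ltr0n //.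
by apply: lerD; [rewrite /hlen | exact: tree_correlation_ip].
Qed.
End FourierBound.

Section QueryTree.
Variable n : nat.

Definition reveal (l : seq 'I_n) (x : input n) : input n := [ffun j => (j \in l) && x j].

Fixpoint query_tree (l : seq 'I_n) (h : input n -> bool) : dtree n :=
  match l with
  | [::] => Leaf n (h [ffun=> false])
  | i :: l' => Node i (query_tree l' (fun y => h [ffun j => if j == i then false else y j]))
                      (query_tree l' (fun y => h [ffun j => if j == i then true else y j]))
  end.

Lemma query_tree_eval l h x : dt_eval (query_tree l h) x = h (reveal l x).
Proof.
elim: l h => [|i l IH] h /=.
  by congr h; apply/ffunP => j; rewrite !ffunE.
rewrite !IH; case xi: (x i); congr h; apply/ffunP => j; rewrite !ffunE in_cons.
  by case: eqVneq => [->|].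
by case: eqVneq => [->|].
Qed.

Lemma query_tree_enum_eval h x : dt_eval (query_tree (enum 'I_n) h) x = h x.
Proof. by rewrite query_tree_eval; congr h; apply/ffunP => j; rewrite ffunE mem_enum. Qed.
End QueryTree.

Section Costs.
Variable R : realType.

Lemma log2_le (x y : R) : 0 < x -> x <= y -> log2 x <= log2 y.
Proof.
move=> x0 xy; rewrite /log2 ler_pM2r ?invr_gt0 ?ln_gt0 ?ltr1n //.
by rewrite ler_ln ?posrE // (lt_le_trans x0).
Qed.

Lemma log2M (x y : R) : 0 < x -> 0 < y -> log2 (x * y) = log2 x + log2 y.
Proof. by move=> x0 y0; rewrite /log2 lnM ?posrE // mulrDl. Qed.

Lemma wu_cost_log2 (T : nat) (p : R) :
  1/2 < p -> wu_cost T p = log2 (2 ^+ T / (2 * p - 1)).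
Proof.
move=> p_gt; have d0 : 0 < 2 * p - 1 by lra.
have ln2 : 0 < ln (2 : R) by rewrite ln_gt0 ?ltr1n.
rewrite /wu_cost; have -> : 2 * (p - 1 / 2) = 2 * p - 1 by field.
rewrite /log2 !ln_div ?posrE ?exprn_gt0 // ln1 lnXn // -mulr_natl.
by field; apply: lt0r_neq0.
Qed.

Lemma log2_le_wu_cost (M p : R) (T : nat) :
  0 < M -> 1/2 < p -> (2 * p - 1) * M <= 2 ^+ T -> log2 M <= wu_cost T p.
Proof.
move=> M0 p_gt bias_le; have d0 : 0 < 2 * p - 1 by lra.
by rewrite wu_cost_log2 //; apply: log2_le; rewrite // ler_pdivlMr // mulrC.
Qed.

Lemma wu_cost1 (T : nat) : wu_cost T (1 : R) = T%:R.
Proof.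
rewrite /wu_cost /log2; have -> : 1 / (2 * (1 - 1 / 2)) = 1 :> R by field.
by rewrite ln1 mul0r addr0.
Qed.

Lemma wu_cost_ge0 (T : nat) (p : R) : 1/2 < p -> p <= 1 -> 0 <= wu_cost T p.
Proof.
move=> p_gt p_le1; rewrite /wu_cost; apply: addr_ge0; first exact: ler0n.
have -> : 0 = log2 (1 : R) by rewrite /log2 ln1 mul0r.
by apply: log2_le => //; rewrite ler_pdivlMr; lra.
Qed.
End Costs.

Section QueryComplexity.
Variables (R : realType) (n : nat).
Implicit Types (f : input n -> bool) (X : {set input n}).

Lemma minsucc_le1 X (p : input n -> R) : minsucc X p <= 1.
Proof. exact: bigmin_le_id. Qed.

Lemma ra_depth_le (A : ralg R n) p :
  List.In p (ra_dist A) -> (dt_depth p.2 <= ra_queries A)%N.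
Proof.
rewrite /ra_queries; elim: (ra_dist A) => [|q l IH] //= [<-|lp]; rewrite big_cons.
  exact: leq_maxl.
exact: leq_trans (IH lp) (leq_maxr _ _).
Qed.

Lemma ra_mean_le (A : ralg R n) (F : dtree n -> R) (B : R) :
  (forall p, List.In p (ra_dist A) -> F p.2 <= B) ->
  \sum_(p <- ra_dist A) p.1 * F p.2 <= B.
Proof.
rewrite -[leRHS]mul1r -(ra_sum1 A) big_distrl /=.
elim: (ra_dist A) (@ra_ge0 _ _ A) => [|p l IH] ge0 FB; rewrite ?big_nil // !big_cons.
apply: lerD; first by apply: ler_wpM2l; [apply: ge0 | apply: FB]; left.
by apply: IH => q lq; [apply: ge0 | apply: FB]; right.
Qed.

Lemma tree_ralg_ge0 (t : dtree n) p : List.In p [:: (1 : R, t)] -> 0 <= p.1.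
Proof. by case=> [<-|//]; apply: ler01. Qed.

Lemma tree_ralg_sum1 (t : dtree n) : \sum_(p <- [:: (1 : R, t)]) p.1 = 1.
Proof. by rewrite big_seq1. Qed.

Definition tree_ralg (t : dtree n) : ralg R n := RAlg (@tree_ralg_ge0 t) (tree_ralg_sum1 t).

Lemma ra_succ_tree_ralg (t : dtree n) f x : ra_succ (tree_ralg t) f x = (dt_eval t x == f x)%:R.
Proof. by rewrite /ra_succ big_seq1 mul1r. Qed.

(* The infimum is over a nonempty set: query every bit and output f. *)
Lemma WUC_ge f X (B : R) :
  (forall A : ralg R n, 1/2 < minsucc X (ra_succ A f) ->
     B <= wu_cost (ra_queries A) (minsucc X (ra_succ A f))) ->
  B <= WUC f X.
Proof.
move=> lbB; apply: lb_le_inf; last by move=> c [A [A_gt ->]]; apply: lbB.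
pose A := tree_ralg (query_tree (enum 'I_n) f).
have succ1 : minsucc X (ra_succ A f) = 1.
  apply: bigmin_eq_id => x _.
  by rewrite ra_succ_tree_ralg query_tree_enum_eval eqxx.
by exists (wu_cost (ra_queries A) 1), A; rewrite succ1; split => //; lra.
Qed.

Lemma WUQ_le f X (A : qalg R n) : 1/2 < minsucc X (qa_succ A f) ->
  WUQ f X <= wu_cost (qa_queries A) (minsucc X (qa_succ A f)).
Proof.
move=> A_gt; apply: ge_inf; last by exists A.
exists 0 => c [A' [A'_gt ->]].
by apply: wu_cost_ge0 => //; apply: minsucc_le1.
Qed.
End QueryComplexity.

Section ClassicalLowerBound.
Variables (I : finType) (R : realType).
Local Notation V := {ffun I -> bool}.
Local Notation M := (#|{: V}|%:R : R).

Lemma card_ffun_gt0 : 0 < M.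
Proof. by rewrite ltr0n; apply/card_gt0P; exists [ffun=> false]. Qed.

Lemma ra_succ_hip_sum (A : ralg R (hlen I)) :
  \sum_s ra_succ A (@hip I) (hcode s) <= (M * M + 2 ^+ ra_queries A * M) / 2.
Proof.
rewrite /ra_succ; under eq_bigr do rewrite hip_hcode.
rewrite exchange_big /=; under eq_bigr do rewrite -big_distrr /=.
apply: (ra_mean_le (F := fun t => \sum_s (dt_eval t (hcode s) == ip s)%:R)) => q q_in.
apply: le_trans (tree_success_count _ _) _.
rewrite natr_hlen ler_pM2r ?invr_gt0 ?ltr0n // lerD2l ler_wpM2r ?ler0n //.
by rewrite ler_weXn2l ?ler1n // ra_depth_le.
Qed.

Lemma hip_cost_ge (A : ralg R (hlen I)) :
  1/2 < minsucc (hdom I) (ra_succ A (@hip I)) ->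
  log2 M <= wu_cost (ra_queries A) (minsucc (hdom I) (ra_succ A (@hip I))).
Proof.
set p := minsucc _ _ => p_gt.
have p_le s : p <= ra_succ A (@hip I) (hcode s) by apply: bigmin_le_cond; apply: imset_f.
have lower : p * (M * M) <= \sum_s ra_succ A (@hip I) (hcode s).
  apply: le_trans (ler_sum _ (fun s _ => p_le s)).
  have -> : \sum_(s : V * V) p = p * (hlen I)%:R by rewrite sumr_const mulr_natr.
  by rewrite natr_hlen.
have M0 := card_ffun_gt0.
apply: log2_le_wu_cost => //; rewrite -(ler_pM2r M0).
have := le_trans lower (ra_succ_hip_sum A).
have -> : (2 * p - 1) * M * M = 2 * (p * (M * M)) - M * M by ring.
move: (p * (M * M)) (M * M) (2 ^+ ra_queries A * M) => x y z; lra.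
Qed.

Lemma WUC_hip_ge : log2 M <= WUC (@hip I) (hdom I).
Proof. by apply: WUC_ge => A; apply: hip_cost_ge. Qed.
End ClassicalLowerBound.

Lemma sum_delta_l (R : pzSemiRingType) (T : finType) (a : T) (F : T -> R) :
  \sum_j (a == j)%:R * F j = F a.
Proof.
rewrite (bigD1 a) //= big1 ?addr0 ?eqxx ?mul1r // => j /negbTE ja.
by rewrite eq_sym ja mul0r.
Qed.

Section RealOperators.
Variables (R : realType) (T : finType).

Lemma conj_realC (x : R) : (x%:C)%C^* = (x%:C)%C.
Proof. exact: conjc_real. Qed.

Lemma normsq_realC (x : R) : normsq (x%:C)%C = x ^+ 2.
Proof. by rewrite /normsq /= expr0n /= addr0. Qed.

Lemma unitary_realC (u : T -> T -> R) :
  (forall i j, \sum_k u k i * u k j = (i == j)%:R) -> unitary (fun k j => (u k j)%:C)%C.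
Proof.
move=> u_orth i j; under eq_bigr do rewrite conj_realC -rmorphM.
by rewrite -rmorph_sum u_orth rmorph_nat.
Qed.

Lemma qapply_realC (u : T -> T -> R) (v : T -> R) :
  qapply (fun k j => (u k j)%:C)%C (fun j => (v j)%:C)%C = (fun k => (\sum_j u k j * v j)%:C)%C.
Proof.
by apply: funext => k; rewrite /qapply; under eq_bigr do rewrite -rmorphM; rewrite -rmorph_sum.
Qed.

Lemma sum_delta_delta (i j : T) : \sum_k (k == i)%:R * (k == j)%:R = (i == j)%:R :> R.
Proof. by under eq_bigr do rewrite eq_sym; rewrite sum_delta_l. Qed.
End RealOperators.

Lemma sum_qbasis1 (R : nmodType) n (F : qbasis n 1 -> R) :
  \sum_k F k = \sum_(i < n) \sum_b F ((i, b), ord0).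
Proof.
rewrite (eq_bigr (fun k => F (k.1, k.2))) => [|[] //].
rewrite -(pair_bigA _ (fun ib z => F (ib, z))) /=; under eq_bigr do rewrite big_ord1.
rewrite (eq_bigr (fun ib => F ((ib.1, ib.2), ord0))) => [|[] //].
by rewrite -(pair_bigA _ (fun i b => F ((i, b), ord0))).
Qed.

Section QuantumAlgorithm.
Variables (I : finType) (R : realType).
Local Notation V := {ffun I -> bool}.
Local Notation W := (V * V)%type.
Local Notation n := (hlen I).
Local Notation B := (qbasis n 1).

Definition amp : R := (Num.sqrt (2 * n%:R))^-1.

Lemma amp_sqr : amp * amp * (2 * n%:R) = 1.
Proof.
have n0 : 0 < 2 * n%:R :> R.
  by rewrite mulr_gt0 // ltr0n; apply/card_gt0P; exists 0.
by rewrite /amp -invfM -expr2 sqr_sqrtr ?ltW // mulVf ?gt_eqF.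
Qed.

Lemma sum_chi_hidx (x y : W) :
  \sum_(i < n) chi (hidx i) x * chi (hidx i) y = if x == y then n%:R else 0 :> R.
Proof.
rewrite (sum_hidx (fun v => chi v x * chi v y)).
under eq_bigr do rewrite [chi _ x]chiC [chi _ y]chiC -chiDl.
by rewrite sum_chi addr_eq0_char2 ?addrr_bool_pair.
Qed.

(* The phase-kickback state: the target qubit is in |->. *)
Definition psi0 (k : B) : R := amp * (-1) ^+ k.1.2.

(* Hadamard transform on the index register, followed by the map sending the
   target qubit |-> to |ip i>, controlled by the index i. *)
Definition decoder (k j : B) : R :=
  amp * chi (hidx k.1.1) (hidx j.1.1) *
  (if k.1.2 == ip (hidx k.1.1) then (-1) ^+ j.1.2 else 1).

Lemma psi0_unit : unit_vec (fun k => (psi0 k)%:C)%C.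
Proof.
rewrite /unit_vec; under eq_bigr do rewrite normsq_realC.
rewrite sum_qbasis1; under eq_bigr do rewrite big_bool /psi0 /= expr0 expr1 mulr1 mulrN1 sqrrN.
by rewrite sumr_const card_ord -mulr_natr -[RHS]amp_sqr; ring.
Qed.

Lemma decoder_orth (j j' : B) : \sum_k decoder k j * decoder k j' = (j == j')%:R.
Proof.
have phase (t c c' : bool) :
    \sum_b (if b == t then (-1) ^+ c else 1) * (if b == t then (-1) ^+ c' else 1)
      = if c == c' then 2 else 0 :> R.
  by rewrite big_bool; case: t; case: c; case: c' => /=; rewrite ?expr0 ?expr1; lra.
rewrite sum_qbasis1.
have inner i : \sum_b decoder ((i, b), ord0) j * decoder ((i, b), ord0) j'
    = amp * amp * (chi (hidx i) (hidx j.1.1) * chi (hidx i) (hidx j'.1.1))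
      * (if j.1.2 == j'.1.2 then 2 else 0).
  rewrite -(phase (ip (hidx i))) big_distrr /=; apply: eq_bigr => b _.
  by rewrite /decoder /= mulrACA; congr (_ * _); rewrite mulrACA.
under eq_bigr do rewrite inner.
rewrite -big_distrl -big_distrr /= sum_chi_hidx {inner}.
case: j j' => [[i c] z] [[i' c'] z']; rewrite /= (ord1 z) (ord1 z') !xpair_eqE eqxx andbT.
have -> : (hidx i == hidx i') = (i == i') by apply/eqP/eqP => [/enum_val_inj|->].
case: (i == i'); case: (c == c') => /=; rewrite ?mulr0 ?mul0r //.
by rewrite -[RHS]amp_sqr; ring.
Qed.

Lemma decoder_unitary U : List.In U [:: (fun k j => (decoder k j)%:C)%C] -> unitary U.
Proof. by case=> [<-|//]; apply: unitary_realC; apply: decoder_orth. Qed.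

Definition hip_qalg : qalg R n :=
  QAlg psi0_unit (unitary_realC (@sum_delta_delta R B)) decoder_unitary.

Lemma qa_final_hcode s k :
  qa_final hip_qalg (hcode s) k = (((hidx k.1.1 == s) && (k.1.2 == ip s))%:R)%:C%C.
Proof.
rewrite /qa_final /= !qapply_realC /oracle /=; congr (_%:C)%C.
under eq_bigr do rewrite sum_delta_l.
have phase (t : bool) : \sum_(b : bool) (if t then (-1) ^+ b else 1) * (-1) ^+ b = if t then 2 else 0 :> R.
  by rewrite big_bool; case: t; rewrite /= ?expr0 ?expr1; lra.
have inner i : \sum_b decoder k ((i, b), ord0) * psi0 ((i, b (+) hcode s i), ord0)
   = amp * amp * (chi (hidx i) (hidx k.1.1) * chi (hidx i) s)
     * (if k.1.2 == ip (hidx k.1.1) then 2 else 0).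
  rewrite -phase big_distrr /=; apply: eq_bigr => b _.
  rewrite /decoder /psi0 /= ffunE signr_addb chiC.
  change ((-1) ^+ dotp (hidx i) s) with (chi (R := R) (hidx i) s).
  by case: (_ == _); ring.
rewrite sum_qbasis1; under eq_bigr do rewrite inner.
rewrite -big_distrl -big_distrr /= sum_chi_hidx {inner}.
case: eqP => [<-|_]; last by rewrite !mulr0 mul0r.
case: (_ == _) => /=; last by rewrite mulr0.
by rewrite -[RHS]amp_sqr; ring.
Qed.

Lemma qa_succ_hcode s : qa_succ hip_qalg (@hip I) (hcode s) = 1.
Proof.
rewrite /qa_succ hip_hcode; under eq_bigr do rewrite qa_final_hcode normsq_realC.
rewrite big_mkcond /= sum_qbasis1 /=.
have inner i : \sum_(b : bool)
    (if b == ip s then ((hidx i == s) && (b == ip s))%:R ^+ 2 else 0) = (hidx i == s)%:R :> R.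
  by rewrite big_bool; case: (ip s); case: (hidx i == s); rewrite /= ?expr1n ?expr0n ?addr0 ?add0r.
under eq_bigr do rewrite inner.
rewrite (sum_hidx (fun v => (v == s)%:R)) (bigD1 s) //= eqxx big1 ?addr0 // => v /negbTE -> //.
Qed.

Lemma WUQ_hip_le1 : WUQ (@hip I) (hdom I) <= 1 :> R.
Proof.
have succ1 : minsucc (hdom I) (qa_succ hip_qalg (@hip I)) = 1.
  by apply: bigmin_eq_id => x /imsetP [s _ ->]; rewrite qa_succ_hcode.
have := @WUQ_le R n (@hip I) (hdom I) hip_qalg.
by rewrite succ1 wu_cost1; apply; lra.
Qed.
End QuantumAlgorithm.

Theorem lemma8 (R : realType) :
  exists c C : R, 0 < c /\ 0 < C /\
    forall N : nat, exists n : nat, (N < n)%N /\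
      exists (X : {set input n}) (f : input n -> bool),
        WUQ f X <= C /\ c * log2 (n%:R : R) <= WUC f X.
Proof.
exists (1/2), 1; split; first lra.
split; first lra.
move=> N; exists (hlen 'I_N); split.
  rewrite hlenE card_ffun card_bool card_ord.
  by apply: leq_trans (ltn_expl N (ltnSn 1)) _; rewrite leq_pmulr // expn_gt0.
exists (hdom 'I_N), (@hip 'I_N); split; first exact: WUQ_hip_le1.
have M0 := @card_ffun_gt0 'I_N R.
by rewrite natr_hlen log2M // mulrDr -mulrDl -splitr mul1r; apply: WUC_hip_ge.
Qed.
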